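(* There exists a Banach algebra which is super weakly amenable but not semiweakly amenable.
   Context: $\mathcal A^*$ is the dual $\mathcal A$-bimodule ($\langle x,a\cdot f\rangle=\langle xa,f\rangle$, $\langle x,f\cdot a\rangle=\langle ax,f\rangle$). A derivation $D:\mathcal A\to X$ is a bounded linear map with $D(ab)=D(a)\cdot b+a\cdot D(b)$; it is inner if $D(a)=a\cdot x-x\cdot a$ for some $x\in X$. $\mathcal A$ is semiweakly amenable if every derivation $D:\mathcal A\to\mathcal A^*$ with $\langle D(a),b\rangle+\langle D(b),a\rangle=0$ for all $a,b$ is inner. For a continuous homomorphism $\varphi:\mathcal A\to\mathcal B$, $\mathcal B_\varphi$ is $\mathcal B$ with $a\cdot b=\varphi(a)b$, $b\cdot a=b\varphi(a)$, and $\mathcal B_\varphi^*$ is its dual bimodule. $\mathcal A$ is super weakly amenable if for every Banach algebra $\mathcal B$, every continuous homomorphism $\varphi:\mathcal A\to\mathcal B$ and every derivation $d:\mathcal A\to\mathcal B_\varphi^*$, $\langle d(a),\varphi(b)\rangle+\langle d(b),\varphi(a)\rangle=0$ for all $a,b\in\mathcal A$. *)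

From HB Require Import structures.
From mathcomp Require Import all_boot all_order all_algebra.
From mathcomp Require Import all_classical all_reals all_analysis.
From mathcomp Require Import complex.
Import Order.TTheory GRing.Theory Num.Theory.
Import numFieldNormedType.Exports.
Local Open Scope ring_scope.
Local Open Scope complex_scope.

Set Implicit Arguments.
Unset Strict Implicit.
Unset Printing Implicit Defensive.

Section BanachAlgebras.
Variable R : realType.
Notation K := (R[i]).

Definition is_linear_map (U W : normedModType K) (f : U -> W) : Prop :=
  forall (c : K) (x y : U), f (c *: x + y) = c *: f x + f y.

Definition is_lin_functional (U : normedModType K) (f : U -> K) : Prop :=
  forall (c : K) (x y : U), f (c *: x + y) = c * f x + f y.

Definition in_dual (U : normedModType K) (f : U -> K) : Prop :=
  is_lin_functional f /\ exists C : R, forall x : U, `|f x| <= C%:C * `|x|.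

Definition banach_algebra (A : completeNormedModType K) (mul : A -> A -> A) : Prop :=
  [/\ (forall x y z : A, mul x (mul y z) = mul (mul x y) z),
      (forall (c : K) (x y z : A), mul (c *: x + y) z = c *: mul x z + mul y z),
      (forall (c : K) (x y z : A), mul z (c *: x + y) = c *: mul z x + mul z y)
    & (forall x y : A, `|mul x y| <= `|x| * `|y|)].

(* A bounded linear map D : A -> A^*, encoded as D : A -> (A -> K) with
   each D a in A^* and D linear and bounded in the operator norm. *)
Definition bounded_to_dual (A : normedModType K) (U : normedModType K)
    (D : A -> U -> K) : Prop :=
  (forall a : A, in_dual (D a)) /\
  (forall (c : K) (a b : A) (x : U), D (c *: a + b) x = c * D a x + D b x) /\
  (exists C : R, forall (a : A) (x : U), `|D a x| <= C%:C * `|a| * `|x|).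

(* Derivation A -> A^* for the dual bimodule:
   <x, a.f> = <xa, f>,  <x, f.a> = <ax, f>.
   D(ab) = D(a).b + a.D(b)  means  <x, D(ab)> = <bx, D a> + <xa, D b>. *)
Definition derivation_to_dual (A : completeNormedModType K) (mul : A -> A -> A)
    (D : A -> A -> K) : Prop :=
  bounded_to_dual D /\
  forall a b x : A, D (mul a b) x = D a (mul b x) + D b (mul x a).

(* D is inner: D(a) = a.f - f.a for some f in A^*. *)
Definition inner_derivation_to_dual (A : completeNormedModType K)
    (mul : A -> A -> A) (D : A -> A -> K) : Prop :=
  exists f : A -> K, in_dual f /\ forall a x : A, D a x = f (mul x a) - f (mul a x).

Definition semiweakly_amenable (A : completeNormedModType K) (mul : A -> A -> A) : Prop :=
  forall D : A -> A -> K, derivation_to_dual mul D ->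
    (forall a b : A, D a b + D b a = 0) -> inner_derivation_to_dual mul D.

Definition cont_homomorphism (A B : completeNormedModType K)
    (mulA : A -> A -> A) (mulB : B -> B -> B) (phi : A -> B) : Prop :=
  [/\ is_linear_map phi,
      (forall a b : A, phi (mulA a b) = mulB (phi a) (phi b))
    & exists C : R, forall a : A, `|phi a| <= C%:C * `|a|].

(* Derivation d : A -> B_phi^*, where B_phi is B with a.b = phi(a)b,
   b.a = b phi(a); dual module: <y, a.g> = <y phi(a), g>, <y, g.a> = <phi(a) y, g>.
   d(ab) = d(a).b + a.d(b)  means
   <y, d(ab)> = <phi(b) y, d a> + <y phi(a), d b>. *)
Definition derivation_to_Bphi_dual (A B : completeNormedModType K)
    (mulA : A -> A -> A) (mulB : B -> B -> B) (phi : A -> B)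
    (d : A -> B -> K) : Prop :=
  bounded_to_dual d /\
  forall (a b : A) (y : B),
    d (mulA a b) y = d a (mulB (phi b) y) + d b (mulB y (phi a)).

Definition super_weakly_amenable (A : completeNormedModType K) (mul : A -> A -> A) : Prop :=
  forall (B : completeNormedModType K) (mulB : B -> B -> B) (phi : A -> B)
         (d : A -> B -> K),
    banach_algebra mulB -> cont_homomorphism mul mulB phi ->
    derivation_to_Bphi_dual mul mulB phi d ->
    forall a b : A, d a (phi b) + d b (phi a) = 0.

End BanachAlgebras.

(* The example is A = C^3 with basis e, x, y, where e is idempotent, ex = x,
   ye = y and every other product of basis vectors vanishes.  For a derivation
   d : A -> B_phi^*, the form T(a, b) = <d a, phi b> is bilinear and satisfies
   the cyclic identity T(ab, c) = T(a, bc) + T(b, ca); instances of it on basis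
   triples give T(e,e) = T(x,x) = T(y,y) = 0 and T(u,v) = -T(v,u) on the other
   basis pairs, so T is antisymmetric and A is super weakly amenable.  On the
   other hand D(u)(v) = u_x v_y - u_y v_x is an antisymmetric derivation
   A -> A^* with D(x)(y) = 1, whereas every inner derivation vanishes at (x, y)
   because xy = yx = 0. *)

From HB Require Import structures.
From mathcomp Require Import all_boot all_order all_algebra.
From mathcomp Require Import all_classical all_reals all_analysis.
From mathcomp Require Import complex.
From mathcomp Require Import ring.

Set Implicit Arguments.
Unset Strict Implicit.
Unset Printing Implicit Defensive.

Import Order.TTheory GRing.Theory Num.Theory.
Import numFieldNormedType.Exports.
Local Open Scope ring_scope.
Local Open Scope complex_scope.
Local Open Scope classical_set_scope.

Section ComplexComplete.
Variable R : realType.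
Implicit Types (z w : R[i]) (k : R).

Lemma normcR k : `|k%:C| = `|k|%:C.
Proof. by rewrite normc_def /= [0 ^+ 2]expr2 mul0r addr0 sqrtr_sqr. Qed.

Lemma normci : `|'i : R[i]| = 1.
Proof. by rewrite normc_def /= expr1n [0 ^+ 2]expr2 mul0r add0r sqrtr1. Qed.

Lemma normc_ge_Im z : `|complex.Im z|%:C <= `|z|.
Proof. by have := normc_ge_Re (z * 'i); rewrite ReiNIm normrN normrM normci mulr1. Qed.

Lemma normc_le_ReIm z : `|z| <= (`|complex.Re z| + `|complex.Im z|)%:C.
Proof.
rewrite {1}[z]complexE rmorphD /= -!normcR.
by apply: le_trans (ler_normD _ _) _; rewrite normrM normci mul1r.
Qed.

Lemma cauchy_contraction (F : set_system (R[i])^o) (f : R[i] -> R) :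
  ProperFilter F -> (forall z w, `|f z - f w|%:C <= `|z - w|) ->
  cauchy F -> cauchy (f @ F).
Proof.
move=> FF f_contr /cauchyP Fc; apply/cauchyP => e e0.
have [z Fz] : exists z : (R[i])^o, F (ball z e%:C) by apply: Fc; rewrite ltcR.
exists (f z); suff : F [set w | ball (f z) e (f w)] by [].
apply: filterS Fz => w; rewrite -!ball_normE /= -ltcR.
exact: le_lt_trans.
Qed.

Lemma complex_complete (F : set_system (R[i])^o) :
  ProperFilter F -> cauchy F -> cvg F.
Proof.
move=> FF Fc.
have /R_complete cvRe : cauchy ((@complex.Re R) @ F).
  apply: cauchy_contraction Fc => z w.
  by case: z w => a b [c d]; exact: (normc_ge_Re ((a - c) +i* (b - d))).
have /R_complete cvIm : cauchy ((@complex.Im R) @ F).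
  apply: cauchy_contraction Fc => z w.
  by case: z w => a b [c d]; exact: (normc_ge_Im ((a - c) +i* (b - d))).
apply/cvg_ex; exists (lim ((@complex.Re R) @ F) +i* lim ((@complex.Im R) @ F)).
apply/cvgrPdist_lt => e; rewrite ltcE /= => /andP[/eqP eIm eRe].
have e2 : 0 < complex.Re e / 2 by rewrite divr_gt0.
have nearRe := proj1 (cvgrPdist_lt _ _) cvRe _ e2.
have nearIm := proj1 (cvgrPdist_lt _ _) cvIm _ e2.
have -> : e = (complex.Re e)%:C by case: e eIm {eRe e2 nearRe nearIm} => a b /= ->.
near=> z; apply: le_lt_trans (normc_le_ReIm _) _.
have -> : z = complex.Re z +i* complex.Im z by move: (z) => -[].
rewrite ltcR [complex.Re e]splitr /=.
by apply: ltrD; near: z; [apply: nearRe | apply: nearIm].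
Unshelve. all: by end_near.
Qed.

End ComplexComplete.

Definition cplx (R : realType) : Type := (R[i])^o.
HB.instance Definition _ (R : realType) := NormedModule.copy (cplx R) (R[i])^o.
HB.instance Definition _ (R : realType) :=
  Uniform_isComplete.Build (cplx R) (@complex_complete R).

Lemma prod_complete (K : numFieldType) (U V : completeNormedModType K)
    (F : set_system ((U : normedModType K) * (V : normedModType K))%type) :
  ProperFilter F -> cauchy F ->
  exists l : ((U : normedModType K) * (V : normedModType K))%type, F --> l.
Proof.
move=> FF /cauchyP Fc.
have normr_lt (x : ((U : normedModType K) * (V : normedModType K))%type) e :
    (`|x| < e) = (`|x.1| < e) && (`|x.2| < e).
  by rewrite prod_normE num_gt_max.
have /cauchy_cvg cv1 : cauchy (fst @ F).
  apply/cauchyP => e e0; have [x Fx] := Fc e e0; exists x.1.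
  suff : F [set y | ball x.1 e y.1] by [].
  by apply: filterS Fx => y; rewrite -!ball_normE /= normr_lt => /andP[].
have /cauchy_cvg cv2 : cauchy (snd @ F).
  apply/cauchyP => e e0; have [x Fx] := Fc e e0; exists x.2.
  suff : F [set y | ball x.2 e y.2] by [].
  by apply: filterS Fx => y; rewrite -!ball_normE /= normr_lt => /andP[].
exists (lim (fst @ F), lim (snd @ F)).
apply/cvgrPdist_lt => e e0.
have near1 := proj1 (cvgrPdist_lt _ _) cv1 _ e0.
have near2 := proj1 (cvgrPdist_lt _ _) cv2 _ e0.
near=> x; rewrite normr_lt; apply/andP; split; near: x; [exact: near1 | exact: near2].
Unshelve. all: by end_near.
Qed.

(* Products of normed modules get no canonical completeness instance from the
   library; [cprod] is the product equipped with one. *)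
Definition cprod {K : numFieldType} (U V : completeNormedModType K) : Type :=
  ((U : normedModType K) * (V : normedModType K))%type.
HB.instance Definition _ (K : numFieldType) (U V : completeNormedModType K) :=
  NormedModule.copy (cprod U V) ((U : normedModType K) * (V : normedModType K))%type.
HB.instance Definition _ (K : numFieldType) (U V : completeNormedModType K) :=
  Uniform_isComplete.Build (cprod U V)
    (fun F FF Fc => proj2 (cvg_ex F) (@prod_complete K U V F FF Fc)).

Definition cplx3 (R : realType) : Type := cprod (cplx R) (cprod (cplx R) (cplx R)).

Section CyclicForm.
Variables (A : zmodType) (V : zmodType) (mul : A -> A -> A) (T : A -> A -> V).

Definition cyclic_form := forall x y z, T (mul x y) z = T x (mul y z) + T y (mul z x).

Hypothesis T_cyclic : cyclic_form.

Lemma cyclic_form_idem e : mul e e = e -> T e e = 0.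
Proof.
move=> ee; have := T_cyclic e e e; rewrite !ee -{1}[T e e]addr0.
by move/addrI.
Qed.

Lemma cyclic_form_antisym x y z :
  (forall w, T 0 w = 0) -> mul x y = 0 -> mul y z = y -> mul z x = x -> T x y + T y x = 0.
Proof. by move=> T0 xy yz zx; rewrite -(T0 z) -xy T_cyclic yz zx. Qed.

Lemma cyclic_form_sqr0 x z :
  (forall w, T w 0 = 0) -> mul z x = x -> mul x x = 0 -> mul x z = 0 -> T x x = 0.
Proof. by move=> T0 zx xx xz; rewrite -{1}zx T_cyclic xx xz !T0 addr0. Qed.
End CyclicForm.

(* With the opposite product the roles of left and right units are swapped:
   this is how T(y, y) = 0 follows from the argument giving T(x, x) = 0. *)
Lemma cyclic_form_op (A V : zmodType) (mul : A -> A -> A) (T : A -> A -> V) :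
  cyclic_form mul T -> cyclic_form (fun x y => mul y x) T.
Proof. by move=> hT x y z; rewrite hT addrC. Qed.

Section BilinearForm.
Variables (K : pzRingType) (U : lmodType K).

Definition bilinear_form (T : U -> U -> K) :=
  (forall c x y z, T (c *: x + y) z = c * T x z + T y z) /\
  (forall c x y z, T x (c *: y + z) = c * T x y + T x z).

Lemma linear_form0 (f : U -> K) : (forall c x y, f (c *: x + y) = c * f x + f y) -> f 0 = 0.
Proof.
move=> f_lin; have := f_lin 1 0 0; rewrite scale1r addr0 mul1r => f00.
by apply: (addrI (f 0)); rewrite addr0 -f00.
Qed.

Variable T : U -> U -> K.
Hypothesis T_bilin : bilinear_form T.

Lemma bilinear_form0l z : T 0 z = 0.
Proof. by apply: (@linear_form0 (T^~ z)) => c x y; apply: (proj1 T_bilin). Qed.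

Lemma bilinear_form0r x : T x 0 = 0.
Proof. by apply: linear_form0 => c y z; apply: (proj2 T_bilin). Qed.

Lemma bilinear_formZl c x z : T (c *: x) z = c * T x z.
Proof. by rewrite -[c *: x]addr0 (proj1 T_bilin) bilinear_form0l addr0. Qed.

Lemma bilinear_formZr c x z : T x (c *: z) = c * T x z.
Proof. by rewrite -[c *: z]addr0 (proj2 T_bilin) bilinear_form0r addr0. Qed.

End BilinearForm.

Section Derivations.
Variable R : realType.
Notation K := (R[i]).

Lemma bounded_to_dual_of_bound (U W : normedModType K) (D : U -> W -> K) (C : R) :
  (forall c a b x, D (c *: a + b) x = c * D a x + D b x) ->
  (forall a c x y, D a (c *: x + y) = c * D a x + D a y) ->
  (forall a x, `|D a x| <= C%:C * `|a| * `|x|) -> bounded_to_dual D.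
Proof.
move=> linl linr bound; split; last by split=> //; exists C.
move=> a; split; first exact: linr.
exists (C * complex.Re `|a|) => x.
by rewrite rmorphM /= RRe_real ?normr_real ?bound.
Qed.

Lemma derivation_pullback_bilinear (A B : completeNormedModType K)
    (mulA : A -> A -> A) (mulB : B -> B -> B) (phi : A -> B) (d : A -> B -> K) :
  cont_homomorphism mulA mulB phi -> derivation_to_Bphi_dual mulA mulB phi d ->
  bilinear_form (fun a b => d a (phi b)).
Proof.
move=> [phi_lin _ _] [[d_dual [d_lin _]] _]; split=> [c x y z|c x y z].
  exact: d_lin.
by rewrite phi_lin; apply: (proj1 (d_dual x)).
Qed.

Lemma derivation_pullback_cyclic (A B : completeNormedModType K)
    (mulA : A -> A -> A) (mulB : B -> B -> B) (phi : A -> B) (d : A -> B -> K) :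
  cont_homomorphism mulA mulB phi -> derivation_to_Bphi_dual mulA mulB phi d ->
  cyclic_form mulA (fun a b => d a (phi b)).
Proof. by move=> [_ phiM _] [_ d_der] x y z; rewrite d_der -!phiM. Qed.

Lemma super_weakly_amenable_of_cyclic (A : completeNormedModType K) (mul : A -> A -> A) :
  (forall T : A -> A -> K, bilinear_form T -> cyclic_form mul T ->
     forall a b, T a b + T b a = 0) ->
  super_weakly_amenable mul.
Proof.
move=> cyclic_antisym B mulB phi d _ phi_hom d_der.
apply: cyclic_antisym.
  exact: derivation_pullback_bilinear phi_hom d_der.
exact: derivation_pullback_cyclic phi_hom d_der.
Qed.

Lemma inner_derivation_annihilator (A : completeNormedModType K) (mul : A -> A -> A)
    (D : A -> A -> K) (a x : A) :
  inner_derivation_to_dual mul D -> mul x a = 0 -> mul a x = 0 -> D a x = 0.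
Proof. by move=> [f [_ Df]] xa ax; rewrite Df xa ax subrr. Qed.
End Derivations.

Lemma le_max3 (D : numDomainType) (x y z t : D) :
  y \is Num.real -> z \is Num.real -> t \is Num.real ->
  [|| x <= y, x <= z | x <= t] -> x <= Num.max y (Num.max z t).
Proof.
move=> ry rz rt; rewrite comparable_le_max ?real_comparable ?max_real //.
by rewrite comparable_le_max ?real_comparable.
Qed.

Lemma max3_le (D : numDomainType) (x y z t : D) :
  x \is Num.real -> y \is Num.real -> z \is Num.real ->
  x <= t -> y <= t -> z <= t -> Num.max x (Num.max y z) <= t.
Proof.
move=> rx ry rz xt yt zt; rewrite comparable_ge_max ?real_comparable ?max_real ?xt //.
by rewrite comparable_ge_max ?real_comparable ?yt.
Qed.

Section ExampleAlgebra.
Variable R : realType.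
Notation K := (R[i]).
Notation A := (cplx3 R).
Implicit Types (u v w : A) (a b c : K).

Definition mk a b c : A := (a, (b, c)).
Definition cE u : K := u.1.
Definition cX u : K := u.2.1.
Definition cY u : K := u.2.2.

Definition eE := mk 1 0 0.
Definition eX := mk 0 1 0.
Definition eY := mk 0 0 1.

Lemma mkE u : u = mk (cE u) (cX u) (cY u).
Proof. by case: u => [a [b c]]. Qed.

Lemma mkZ k a b c : k *: mk a b c = mk (k * a) (k * b) (k * c).
Proof. by []. Qed.

Lemma mkD a b c a' b' c' : mk a b c + mk a' b' c' = mk (a + a') (b + b') (c + c').
Proof. by []. Qed.

Lemma cplx3_decomp u : u = cE u *: eE + (cX u *: eX + cY u *: eY).
Proof. by rewrite {1}[u]mkE !mkZ !mkD; congr mk; rewrite /=; ring. Qed.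

Lemma normr_mk a b c : `|mk a b c| = Num.max `|a| (Num.max `|b| `|c|).
Proof. by rewrite prod_normE (prod_normE (b, c)). Qed.

Lemma normr_cE u : `|cE u| <= `|u|.
Proof. by rewrite {2}[u]mkE normr_mk le_max3 ?normr_real ?lexx. Qed.

Lemma normr_cX u : `|cX u| <= `|u|.
Proof. by rewrite {2}[u]mkE normr_mk le_max3 ?normr_real ?lexx ?orbT. Qed.

Lemma normr_cY u : `|cY u| <= `|u|.
Proof. by rewrite {2}[u]mkE normr_mk le_max3 ?normr_real ?lexx ?orbT. Qed.

Definition mul u v := mk (cE u * cE v) (cE u * cX v) (cY u * cE v).

Lemma mul_mk a b c a' b' c' : mul (mk a b c) (mk a' b' c') = mk (a * a') (a * b') (c * a').
Proof. by []. Qed.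

Lemma banach_algebra_mul : banach_algebra mul.
Proof.
split.
- by move=> u v w; rewrite [u]mkE [v]mkE [w]mkE !mul_mk !mulrA.
- move=> k u v w; rewrite [u]mkE [v]mkE [w]mkE mkZ mkD !mul_mk mkZ mkD.
  by congr mk; ring.
- move=> k u v w; rewrite [u]mkE [v]mkE [w]mkE mkZ mkD !mul_mk mkZ mkD.
  by congr mk; ring.
- move=> u v; rewrite /mul normr_mk.
  by apply: max3_le; rewrite ?normr_real // normrM
    ler_pM ?normr_ge0 ?normr_cE ?normr_cX ?normr_cY.
Qed.

Lemma mk0 : mk 0 0 0 = 0 :> A.
Proof. by []. Qed.

Lemma cyclic_form_cplx3_antisym (T : A -> A -> K) :
  bilinear_form T -> cyclic_form mul T -> forall u v, T u v + T v u = 0.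
Proof.
move=> T_bilin T_cyc u v.
have T0l := bilinear_form0l T_bilin; have T0r := bilinear_form0r T_bilin.
have mulEE : mul eE eE = eE by rewrite mul_mk !(mulr0, mulr1).
have mulEX : mul eE eX = eX by rewrite mul_mk !(mulr0, mulr1).
have mulEY : mul eE eY = 0 by rewrite mul_mk !(mulr0, mul0r) mk0.
have mulXE : mul eX eE = 0 by rewrite mul_mk !(mulr0, mul0r) mk0.
have mulXX : mul eX eX = 0 by rewrite mul_mk !(mulr0, mul0r) mk0.
have mulXY : mul eX eY = 0 by rewrite mul_mk !(mulr0, mul0r) mk0.
have mulYE : mul eY eE = eY by rewrite mul_mk !(mulr0, mul0r, mulr1).
have mulYY : mul eY eY = 0 by rewrite mul_mk !(mulr0, mul0r) mk0.
have TEE : T eE eE = 0 := cyclic_form_idem T_cyc mulEE.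
have TXX : T eX eX = 0 := cyclic_form_sqr0 T_cyc T0r mulEX mulXX mulXE.
have TYY : T eY eY = 0 := cyclic_form_sqr0 (cyclic_form_op T_cyc) T0r mulYE mulYY mulEY.
have anti x y : T x y + T y x = 0 -> T y x = - T x y.
  by move/eqP; rewrite addrC addr_eq0 => /eqP.
have TEX := anti _ _ (cyclic_form_antisym T_cyc T0l mulXE mulEE mulEX).
have TYX := anti _ _ (cyclic_form_antisym T_cyc T0l mulXY mulYE mulEX).
have TYE := anti _ _ (cyclic_form_antisym T_cyc T0l mulEY mulYE mulEE).
rewrite [u]cplx3_decomp [v]cplx3_decomp.
rewrite !(proj1 T_bilin) !(proj2 T_bilin).
rewrite !(bilinear_formZl T_bilin) !(bilinear_formZr T_bilin).
rewrite TEE TXX TYY TEX TYX TYE; ring.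
Qed.

Definition derXY u v : K := cX u * cY v - cY u * cX v.

Lemma derXY_mk a b c a' b' c' : derXY (mk a b c) (mk a' b' c') = b * c' - c * b'.
Proof. by []. Qed.

Lemma derXY_bound u v : `|derXY u v| <= 2%:C * `|u| * `|v|.
Proof.
have -> : 2%:C * `|u| * `|v| = `|u| * `|v| + `|u| * `|v| :> K by ring.
apply: le_trans (ler_normB _ _) _.
by rewrite !normrM lerD // ler_pM ?normr_ge0 ?normr_cX ?normr_cY.
Qed.

Lemma derivation_derXY : derivation_to_dual mul derXY.
Proof.
split; last first.
  by move=> u v w; rewrite [u]mkE [v]mkE [w]mkE !mul_mk !derXY_mk; ring.
apply: (bounded_to_dual_of_bound (C := 2)); last exact: derXY_bound.
  by move=> k u v w; rewrite [u]mkE [v]mkE [w]mkE mkZ mkD !derXY_mk; ring.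
by move=> u k v w; rewrite [u]mkE [v]mkE [w]mkE mkZ mkD !derXY_mk; ring.
Qed.

Lemma derXY_antisym u v : derXY u v + derXY v u = 0.
Proof. by rewrite /derXY; ring. Qed.

Lemma not_semiweakly_amenable_mul : ~ semiweakly_amenable mul.
Proof.
move=> swa; have inner := swa _ derivation_derXY derXY_antisym.
have mulYX : mul eY eX = 0 by rewrite mul_mk !(mulr0, mul0r) mk0.
have mulXY : mul eX eY = 0 by rewrite mul_mk !(mulr0, mul0r) mk0.
have := inner_derivation_annihilator inner mulYX mulXY.
by rewrite derXY_mk mulr1 mulr0 subr0 => /eqP; rewrite oner_eq0.
Qed.
End ExampleAlgebra.

Theorem corollary3p7 (R : realType) :
  exists (A : completeNormedModType R[i]) (mul : A -> A -> A),
    [/\ banach_algebra mul, super_weakly_amenable mul & ~ semiweakly_amenable mul].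
Proof.
exists (cplx3 R), (@mul R); split.
- exact: banach_algebra_mul.
- apply: super_weakly_amenable_of_cyclic; exact: cyclic_form_cplx3_antisym.
- exact: not_semiweakly_amenable_mul.
Qed.
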